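(* Let $X,Y$ take values in $\mathbb Z_d$, let $P_Y$ be a probability distribution on $\mathbb Z_d$, $\{\sigma_z\}_{z\in\mathbb Z_d}$ density operators on $\mathcal H_B$, and consider $\psi_{XYB}=\frac1d\sum_{x,z}P_Y(z)|x\rangle\langle x|_X\otimes|x+z\rangle\langle x+z|_Y\otimes(\sigma_z)_B$ and $\rho_{YB}=\sum_yP_Y(y)|y\rangle\langle y|_Y\otimes(\sigma_y)_B$. Then for any conditional entropy $\mathsf H$ of the form $\mathsf H_\downarrow$ or $\mathsf H_\uparrow$ below, $\mathsf H(X|YB)_\psi=\mathsf H(Y|B)_\rho$ and $\mathsf H^\perp(X|YB)_\psi=\mathsf H^\perp(Y|B)_\rho$.
   Context: Finite-dimensional spaces. A divergence $\mathsf D(\rho,\sigma)$ is any function satisfying data processing under quantum channels, $\mathsf D(\rho,c\sigma)=\mathsf D(\rho,\sigma)-\log c$ ($c>0$), dominance ($\sigma'\ge\sigma\Rightarrow\mathsf D(\rho,\sigma')\le\mathsf D(\rho,\sigma)$), and $\mathsf D(\rho,\rho)=0$. $\mathsf H_\downarrow(A|B)_\rho=-\mathsf D(\rho_{AB},\mathbb I_A\otimes\rho_B)$, $\mathsf H_\uparrow(A|B)_\rho=\max_{\sigma_B}[-\mathsf D(\rho_{AB},\mathbb I_A\otimes\sigma_B)]$ over density operators. Dual entropy: $\mathsf H^\perp(A|B)_\rho=-\mathsf H(A|C)_\rho$ where $\rho_{ABC}$ is a purification of $\rho_{AB}$. *)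

From HB Require Import structures.
From mathcomp Require Import all_boot all_order all_algebra.
Set Implicit Arguments. Unset Strict Implicit. Unset Printing Implicit Defensive.
Import Order.TTheory GRing.Theory Num.Theory.
Local Open Scope ring_scope.

Section QDefs.
Variable C : numClosedFieldType.

Definition adj m n (A : 'M[C]_(m, n)) : 'M[C]_(n, m) := (map_mx Num.conj A)^T.

Definition psd n (A : 'M[C]_n) : Prop :=
  forall v : 'cV[C]_n, 0 <= (adj v *m A *m v) 0 0.

Definition loewner_le n (A B : 'M[C]_n) : Prop := psd (B - A).

Definition density n (rho : 'M[C]_n) : Prop := psd rho /\ \tr rho = 1.

(* splitting an index of a tensor product space H_m (x) H_n *)
Definition unpair m n (k : 'I_(m * n)) : 'I_m * 'I_n :=
  enum_val (cast_ord (esym (mxvec_cast m n)) k).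

(* Kronecker (tensor) product, basis |i>|j> indexed by mxvec_index i j *)
Definition kron m1 n1 m2 n2 (A : 'M[C]_(m1, n1)) (B : 'M[C]_(m2, n2))
  : 'M[C]_(m1 * m2, n1 * n2) :=
  \matrix_(k, l) (A (unpair k).1 (unpair l).1 * B (unpair k).2 (unpair l).2).

Definition ptrace2 m n (A : 'M[C]_(m * n)) : 'M[C]_m :=
  \matrix_(i, j) \sum_(t < n) A (mxvec_index i t) (mxvec_index j t).
Definition ptrace1 m n (A : 'M[C]_(m * n)) : 'M[C]_n :=
  \matrix_(i, j) \sum_(s < m) A (mxvec_index s i) (mxvec_index s j).
(* trace out the middle factor of H_a (x) H_m (x) H_c, giving a state on H_a (x) H_c *)
Definition ptrace_mid a m c (A : 'M[C]_((a * m) * c)) : 'M[C]_(a * c) :=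
  \matrix_(k, l) \sum_(t < m)
     A (mxvec_index (mxvec_index (unpair k).1 t) (unpair k).2)
       (mxvec_index (mxvec_index (unpair l).1 t) (unpair l).2).

(* quantum channel H_n -> H_m, given by Kraus operators K with sum K^dag K = 1 *)
Definition kraus_channel n m (Ks : seq 'M[C]_(m, n)) : Prop :=
  \sum_(K <- Ks) (adj K *m K) = 1%:M.
Definition apply_channel n m (Ks : seq 'M[C]_(m, n)) (X : 'M[C]_n) : 'M[C]_m :=
  \sum_(K <- Ks) (K *m X *m adj K).

Inductive ext : Type := EFin of C | EPInf | ENInf.

Definition ext_le (x y : ext) : Prop :=
  match x, y with
  | ENInf, _ => True
  | _, EPInf => True
  | EFin a, EFin b => a <= b
  | _, _ => False
  end.

Definition ext_opp (x : ext) : ext :=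
  match x with EFin a => EFin (- a) | EPInf => ENInf | ENInf => EPInf end.

Definition ext_subC (x : ext) (c : C) : ext :=
  match x with EFin a => EFin (a - c) | e => e end.

Definition ext_real (x : ext) : Prop :=
  match x with EFin a => a \is Num.real | _ => True end.

Definition is_log (log : C -> C) : Prop :=
  (forall x, 0 < x -> log x \is Num.real) /\
  (forall x y, 0 < x -> 0 < y -> log (x * y) = log x + log y).

Definition divergence_family := forall n : nat, 'M[C]_n -> 'M[C]_n -> ext.

Definition divergence (log : C -> C) (D : divergence_family) : Prop :=
  (forall n (rho sigma : 'M[C]_n), ext_real (D n rho sigma)) /\
  (forall n m (Ks : seq 'M[C]_(m, n)) (rho sigma : 'M[C]_n),
      kraus_channel Ks -> density rho -> psd sigma ->
      ext_le (D m (apply_channel Ks rho) (apply_channel Ks sigma)) (D n rho sigma)) /\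
  (forall n (rho sigma : 'M[C]_n) (c : C),
      density rho -> psd sigma -> 0 < c ->
      D n rho (c *: sigma) = ext_subC (D n rho sigma) (log c)) /\
  (forall n (rho sigma sigma' : 'M[C]_n),
      density rho -> psd sigma -> loewner_le sigma sigma' ->
      ext_le (D n rho sigma') (D n rho sigma)) /\
  (forall n (rho : 'M[C]_n), density rho -> D n rho rho = EFin 0).

Definition Hdown (D : divergence_family) a b (rho : 'M[C]_(a * b)) : ext :=
  ext_opp (D (a * b)%N rho (kron (1%:M : 'M[C]_a) (ptrace1 rho))).

(* h is an upper bound of { - D(rho_AB, I_A (x) sigma_B) : sigma_B density };
   H_up(A|B)_rho is the supremum (maximum) of this set, and two such suprema are
   equal iff the two sets have the same upper bounds. *)
Definition Hup_ub (D : divergence_family) a b (rho : 'M[C]_(a * b)) (h : ext) : Prop :=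
  forall sigma : 'M[C]_b, density sigma ->
    ext_le (ext_opp (D (a * b)%N rho (kron (1%:M : 'M[C]_a) sigma))) h.

Definition proj n (x : 'I_n) : 'M[C]_n := delta_mx x x.

(* a (not necessarily normalized) pure operator |v><v| on H_a (x) H_m (x) H_c; it is a
   purification of rho_{A M} (on H_a (x) H_m) iff ptrace2 (pure v) = rho *)
Definition pure n (v : 'cV[C]_n) : 'M[C]_n := v *m adj v.

End QDefs.
Arguments proj {C n} x.

From HB Require Import structures.
From mathcomp Require Import all_boot all_order all_algebra.
From mathcomp Require Import ring.
Set Implicit Arguments. Unset Strict Implicit. Unset Printing Implicit Defensive.
Import Order.TTheory GRing.Theory Num.Theory.
Local Open Scope ring_scope.

(* Everything reduces to one monotonicity principle: a channel on AB with Kraus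
   operators U_k (x) F_k, all U_k unitary, can only increase H_down(A|B) and
   H_up(A|B), because it maps I_A (x) S to I_A (x) F(S) and commutes with the
   partial trace over A, so data processing applies.  The two states are
   interconvertible by such channels: from psi_{X:YB} measure Y = s and relabel
   X to s - X; from rho_{Y:B} prepare a uniform s in a fresh register and
   relabel Y to s - Y.  For the dual entropies, a purification of rho yields an
   explicit purification of psi whose XC-marginal is interconvertible with the
   YC-marginal of rho in the same way; and any two purifications of one state
   have XC-marginals interconvertible by channels acting on the purifying
   systems alone, since coefficient matrices with equal Gram matrices differ by
   a partial isometry. *)

Section Tensor.
Variable C : numClosedFieldType.

Lemma unpairK m n (i : 'I_m) (j : 'I_n) : unpair (mxvec_index i j) = (i, j).
Proof. by rewrite /unpair /mxvec_index cast_ordK enum_rankK. Qed.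

Lemma mxvec_index_eq m n (i i' : 'I_m) (j j' : 'I_n) :
  (mxvec_index i j == mxvec_index i' j') = (i == i') && (j == j').
Proof.
apply/eqP/andP => [E|[/eqP-> /eqP->]] //.
by have := congr1 (@unpair m n) E; rewrite !unpairK => -[-> ->].
Qed.

Lemma big_mxvec_index m n (F : 'I_(m * n) -> C) :
  \sum_k F k = \sum_i \sum_j F (mxvec_index i j).
Proof.
rewrite pair_big /= (reindex (fun p : 'I_m * 'I_n => mxvec_index p.1 p.2)) //=.
exists (@unpair m n) => [[i j] _ | k _] /=; first by rewrite unpairK.
by case/mxvec_indexP: k => i j; rewrite unpairK.
Qed.

Lemma sum_delta n (a0 : 'I_n) (f : 'I_n -> C) :
  \sum_a ((a == a0)%:R * f a) = f a0.
Proof.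
rewrite (bigD1 a0) //= eqxx mul1r big1 ?addr0 // => a /negbTE ->.
by rewrite mul0r.
Qed.

Lemma sum_delta' n (a0 : 'I_n) (f : 'I_n -> C) :
  \sum_a ((a0 == a)%:R * f a) = f a0.
Proof. by rewrite -[RHS](sum_delta a0); apply: eq_bigr => a _; rewrite eq_sym. Qed.

Lemma kronE m1 n1 m2 n2 (A : 'M[C]_(m1, n1)) (B : 'M[C]_(m2, n2)) i j i' j' :
  kron A B (mxvec_index i j) (mxvec_index i' j') = A i i' * B j j'.
Proof. by rewrite mxE !unpairK. Qed.

Lemma adjE m n (A : 'M[C]_(m, n)) i j : adj A i j = (A j i)^*.
Proof. by rewrite !mxE. Qed.

Lemma adjM m n p (A : 'M[C]_(m, n)) (B : 'M[C]_(n, p)) :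
  adj (A *m B) = adj B *m adj A.
Proof. by rewrite /adj map_mxM trmx_mul. Qed.

Lemma adjK m n (A : 'M[C]_(m, n)) : adj (adj A) = A.
Proof. by apply/matrixP => i j; rewrite !adjE conjCK. Qed.

Lemma adj_mx1 n : adj (1%:M : 'M[C]_n) = 1%:M.
Proof. by rewrite /adj map_mx1 trmx1. Qed.

Lemma adjB m n (A B : 'M[C]_(m, n)) : adj (A - B) = adj A - adj B.
Proof. by apply/matrixP => i j; rewrite !mxE rmorphB. Qed.

Lemma adj_scalemx m n c (A : 'M[C]_(m, n)) : adj (c *: A) = c^* *: adj A.
Proof. by apply/matrixP => i j; rewrite !mxE rmorphM. Qed.

Lemma adj_delta m n (i : 'I_m) (j : 'I_n) :
  adj (delta_mx i j : 'M[C]_(m, n)) = delta_mx j i.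
Proof. by apply/matrixP => k l; rewrite adjE !mxE rmorph_nat andbC. Qed.

Lemma adj_trmx m n (A : 'M[C]_(m, n)) : adj A^T = (adj A)^T.
Proof. by apply/matrixP => i j; rewrite !mxE. Qed.

Lemma mulmx_kron m1 n1 p1 m2 n2 p2 (A : 'M[C]_(m1, n1)) (B : 'M[C]_(m2, n2))
  (A' : 'M[C]_(n1, p1)) (B' : 'M[C]_(n2, p2)) :
  kron A B *m kron A' B' = kron (A *m A') (B *m B').
Proof.
apply/matrixP => k l; case/mxvec_indexP: k => i j; case/mxvec_indexP: l => i' j'.
rewrite kronE !mxE big_mxvec_index big_distrl; apply: eq_bigr => a _.
by rewrite big_distrr; apply: eq_bigr => b _ /=; rewrite !kronE mulrACA.
Qed.

Lemma adj_kron m1 n1 m2 n2 (A : 'M[C]_(m1, n1)) (B : 'M[C]_(m2, n2)) :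
  adj (kron A B) = kron (adj A) (adj B).
Proof.
apply/matrixP => k l; case/mxvec_indexP: k => i j; case/mxvec_indexP: l => i' j'.
by rewrite adjE !kronE !adjE rmorphM.
Qed.

Lemma kron1 m n : kron (1%:M : 'M[C]_m) (1%:M : 'M[C]_n) = 1%:M.
Proof.
apply/matrixP => k l; case/mxvec_indexP: k => i j; case/mxvec_indexP: l => i' j'.
by rewrite kronE !mxE mxvec_index_eq; case: (i == i'); case: (j == j');
  rewrite ?mulr1 ?mulr0 ?mul0r.
Qed.

Lemma kron_sumr m1 n1 m2 n2 I (r : seq I) (P : pred I) (A : 'M[C]_(m1, n1))
   (F : I -> 'M[C]_(m2, n2)) :
  kron A (\sum_(i <- r | P i) F i) = \sum_(i <- r | P i) kron A (F i).
Proof.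
apply/matrixP => k l; case/mxvec_indexP: k => i j; case/mxvec_indexP: l => i' j'.
rewrite kronE !summxE big_distrr; apply: eq_bigr => x _.
by rewrite kronE.
Qed.

Lemma kron_suml m1 n1 m2 n2 I (r : seq I) (P : pred I) (B : 'M[C]_(m2, n2))
   (F : I -> 'M[C]_(m1, n1)) :
  kron (\sum_(i <- r | P i) F i) B = \sum_(i <- r | P i) kron (F i) B.
Proof.
apply/matrixP => k l; case/mxvec_indexP: k => i j; case/mxvec_indexP: l => i' j'.
rewrite kronE !summxE big_distrl; apply: eq_bigr => x _.
by rewrite kronE.
Qed.

Lemma mulmx_adjE m n (K : 'M[C]_(m, n)) X i i' :
  (K *m X *m adj K) i i' = \sum_k \sum_l K i k * X k l * (K i' l)^*.
Proof.
rewrite mxE; under eq_bigr do rewrite mxE big_distrl adjE.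
by rewrite exchange_big.
Qed.

Definition rowsel m n (f : 'I_m -> 'I_n) (c : 'I_m -> C) : 'M[C]_(m, n) :=
  \matrix_(i, k) (c i * (f i == k)%:R).

Lemma rowsel_conjE m n (f : 'I_m -> 'I_n) c X i i' :
  (rowsel f c *m X *m adj (rowsel f c)) i i' = c i * X (f i) (f i') * (c i')^*.
Proof.
rewrite mulmx_adjE (bigD1 (f i)) //= [X in _ + X]big1 ?addr0; last first.
  move=> k /negbTE kf; apply: big1 => l _; rewrite mxE (eq_sym (f i)) kf.
  by rewrite mulr0 !mul0r.
rewrite (bigD1 (f i')) //= [X in _ + X]big1 ?addr0; last first.
  move=> l /negbTE lf; rewrite [rowsel f c i' l]mxE (eq_sym (f i')) lf.
  by rewrite mulr0 rmorph0 mulr0.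
by rewrite !mxE !eqxx !mulr1.
Qed.

Lemma rowsel_gramE m n (f : 'I_m -> 'I_n) c k l :
  (adj (rowsel f c) *m rowsel f c) k l =
  (k == l)%:R * \sum_(i | f i == k) ((c i)^* * c i).
Proof.
rewrite mxE (bigID (fun i => f i == k)) /= [X in _ + X]big1 ?addr0; last first.
  by move=> i /negbTE fk; rewrite adjE mxE fk mulr0 rmorph0 mul0r.
rewrite big_distrr; apply: eq_bigr => i /eqP fk.
by rewrite adjE !mxE fk eqxx mulr1 /= mulrA mulrC.
Qed.

Lemma kron_rowsel m1 n1 m2 n2 (f : 'I_m1 -> 'I_n1) c (g : 'I_m2 -> 'I_n2) e :
  kron (rowsel f c) (rowsel g e) =
  rowsel (fun k => mxvec_index (f (unpair k).1) (g (unpair k).2))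
         (fun k => c (unpair k).1 * e (unpair k).2).
Proof.
apply/matrixP => k l; case/mxvec_indexP: k => i j; case/mxvec_indexP: l => i' j'.
rewrite kronE !mxE !unpairK /= mxvec_index_eq.
by case: (f i == i'); case: (g j == j'); rewrite /= ?mulr1 ?mulr0 ?mul0r ?mulrACA.
Qed.

(* [slice m t] is <t| (x) I_m; [embed m e t] is e |t> (x) I_m. *)
Definition slice a m (t : 'I_a) : 'M[C]_(m, a * m) :=
  rowsel (fun j => mxvec_index t j) (fun _ => 1).

Definition embed a m (e : C) (t : 'I_a) : 'M[C]_(a * m, m) :=
  rowsel (fun k => (unpair k).2) (fun k => e * ((unpair k).1 == t)%:R).

Lemma adj_slice a m (t : 'I_a) : adj (slice m t) = embed m 1 t.
Proof.
apply/matrixP => k j; case/mxvec_indexP: k => i i'.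
rewrite adjE !mxE unpairK mxvec_index_eq /= !mul1r rmorph_nat (eq_sym t) (eq_sym j).
by case: (i == t); case: (i' == j); rewrite ?mulr1 ?mulr0.
Qed.

Lemma embed_scale a m e (t : 'I_a) : embed m e t = e *: embed m 1 t.
Proof. by apply/matrixP => k j; rewrite !mxE mul1r mulrA. Qed.

Lemma slice_isometry a m (t : 'I_a) : slice m t *m adj (slice m t) = 1%:M.
Proof.
apply/matrixP => j j'.
have := rowsel_conjE (fun j => mxvec_index t j) (fun _ => 1 : C) 1%:M j j'.
rewrite mulmx1 => ->; by rewrite !mxE mxvec_index_eq eqxx rmorph1 mulr1 mul1r.
Qed.

Lemma kron_proj_slice a m (t : 'I_a) (S : 'M[C]_m) :
  kron (proj t) S = adj (slice m t) *m S *m slice m t.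
Proof.
rewrite -{2}[slice m t]adjK adj_slice.
apply/matrixP => k l; case/mxvec_indexP: k => i j; case/mxvec_indexP: l => i' j'.
rewrite kronE rowsel_conjE !unpairK /= !mxE !mul1r rmorph_nat.
by case: (i == t); case: (i' == t); rewrite /= ?mulr0 ?mul0r ?mul1r ?mulr1.
Qed.

Lemma kron1_slices a m (S : 'M[C]_m) :
  kron (1%:M : 'M_a) S = \sum_t adj (slice m t) *m S *m slice m t.
Proof.
rewrite mx1_sum_delta kron_suml.
by apply: eq_bigr => t _; rewrite -kron_proj_slice.
Qed.

Lemma sum_slice_gram a m : \sum_(t < a) adj (slice m t) *m slice m t = 1%:M.
Proof.
rewrite -[RHS](kron1 a m) kron1_slices.
by apply: eq_bigr => t _; rewrite mulmx1.
Qed.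

Lemma ptrace1_slices a m (X : 'M[C]_(a * m)) :
  ptrace1 X = \sum_t slice m t *m X *m adj (slice m t).
Proof.
apply/matrixP => i j; rewrite !mxE summxE; apply: eq_bigr => t _.
by rewrite rowsel_conjE rmorph1 mulr1 mul1r.
Qed.

End Tensor.

Arguments slice {C a} m t.
Arguments embed {C a} m e t.

Section States.
Variable C : numClosedFieldType.

Lemma psd_sum n I (r : seq I) (P : pred I) (F : I -> 'M[C]_n) :
  (forall i, P i -> psd (F i)) -> psd (\sum_(i <- r | P i) F i).
Proof.
move=> psdF v; rewrite mulmx_sumr mulmx_suml summxE.
by apply: sumr_ge0 => i Pi; apply: psdF.
Qed.

Lemma psdZ n c (A : 'M[C]_n) : 0 <= c -> psd A -> psd (c *: A).
Proof. by move=> c_ge0 psdA v; rewrite -scalemxAr -scalemxAl mxE mulr_ge0. Qed.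

Lemma psd_conj m n (K : 'M[C]_(m, n)) X : psd X -> psd (K *m X *m adj K).
Proof. by move=> psdX v; have := psdX (adj K *m v); rewrite adjM adjK !mulmxA. Qed.

Lemma psd_pure n (v : 'cV[C]_n) : psd (pure v).
Proof.
move=> u; rewrite /pure mulmxA -mulmxA.
have -> : adj v *m u = adj (adj u *m v) by rewrite adjM adjK.
by rewrite mxE big_ord1 adjE mul_conjC_ge0.
Qed.

Lemma psd_kron1 a m (S : 'M[C]_m) : psd S -> psd (kron (1%:M : 'M_a) S).
Proof.
move=> psdS; rewrite kron1_slices; apply: psd_sum => t _.
by rewrite -{2}[slice m t]adjK; apply: psd_conj.
Qed.

Lemma psd_ptrace1 a m (X : 'M[C]_(a * m)) : psd X -> psd (ptrace1 X).
Proof. by move=> psdX; rewrite ptrace1_slices; apply: psd_sum => t _; apply: psd_conj. Qed.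

Lemma density_kron_proj a m (t : 'I_a) (S : 'M[C]_m) :
  density S -> density (kron (proj t) S).
Proof.
case=> psdS trS; rewrite kron_proj_slice; split.
  by rewrite -{2}[slice m t]adjK; apply: psd_conj.
by rewrite mxtrace_mulC mulmxA slice_isometry mul1mx.
Qed.

Lemma density_convex n I (w : I -> C) (S : I -> 'M[C]_n) (r : seq I) :
  (forall i, 0 <= w i) -> \sum_(i <- r) w i = 1 -> (forall i, density (S i)) ->
  density (\sum_(i <- r) w i *: S i).
Proof.
move=> w_ge0 w_sum densS; split.
  by apply: psd_sum => i _; apply: psdZ => //; case: (densS i).
rewrite raddf_sum /= -w_sum; apply: eq_bigr => i _.
by rewrite mxtraceZ; case: (densS i) => _ ->; rewrite mulr1.
Qed.

Lemma mxtrace_apply_channel n m (Ks : seq 'M[C]_(m, n)) X :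
  kraus_channel Ks -> \tr (apply_channel Ks X) = \tr X.
Proof.
move=> KsP; rewrite /apply_channel raddf_sum /=.
under eq_bigr do rewrite mxtrace_mulC mulmxA.
by rewrite -raddf_sum -mulmx_suml KsP mul1mx.
Qed.

Lemma density_apply_channel n m (Ks : seq 'M[C]_(m, n)) X :
  kraus_channel Ks -> density X -> density (apply_channel Ks X).
Proof.
move=> KsP [psdX trX]; split; last by rewrite mxtrace_apply_channel.
by apply: psd_sum => K _; apply: psd_conj.
Qed.

End States.

Section KronChannels.
Variables (C : numClosedFieldType) (a m m' : nat).
Implicit Types (UFs : seq ('M[C]_a * 'M[C]_(m', m))) (X : 'M[C]_(a * m)).

Definition kron_kraus UFs : seq 'M[C]_(a * m', a * m) :=
  [seq kron UF.1 UF.2 | UF <- UFs].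

Definition fst_unitary UFs := forall UF, UF \in UFs -> adj UF.1 *m UF.1 = 1%:M.

Lemma kraus_channel_kron UFs :
  fst_unitary UFs -> kraus_channel (map snd UFs) -> kraus_channel (kron_kraus UFs).
Proof.
rewrite /kraus_channel !big_map => unitaryU FsP.
rewrite big_seq (eq_bigr (fun UF => kron 1%:M (adj UF.2 *m UF.2))); last first.
  by move=> UF /unitaryU UU; rewrite adj_kron mulmx_kron UU.
by rewrite -big_seq -kron_sumr FsP kron1.
Qed.

Lemma apply_kron_kraus_kron1 UFs S : fst_unitary UFs ->
  apply_channel (kron_kraus UFs) (kron 1%:M S) =
  kron 1%:M (apply_channel (map snd UFs) S).
Proof.
rewrite /apply_channel !big_map kron_sumr => unitaryU.
rewrite big_seq [RHS]big_seq; apply: eq_bigr => UF /unitaryU /mulmx1C UU.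
by rewrite adj_kron !mulmx_kron mulmx1 UU.
Qed.

Lemma ptrace1_conj_kron (U : 'M[C]_a) (F : 'M[C]_(m', m)) X :
  adj U *m U = 1%:M ->
  ptrace1 (kron U F *m X *m adj (kron U F)) = F *m ptrace1 X *m adj F.
Proof.
move=> /matrixP UU; apply/matrixP => j j'; rewrite mulmx_adjE mxE.
have UUE i i1 (f x g : C) : \sum_s (U s i * f * x * (U s i1 * g)^*) =
    (i1 == i)%:R * (f * x * g^*).
  have := UU i1 i; rewrite !mxE => <-; rewrite big_distrl /=.
  by apply: eq_bigr => s _; rewrite adjE rmorphM /=; ring.
under eq_bigr do rewrite mulmx_adjE big_mxvec_index.
under eq_bigr do under eq_bigr do under eq_bigr do rewrite big_mxvec_index.
under eq_bigr do under eq_bigr do under eq_bigr do under eq_bigr do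
  under eq_bigr do rewrite !kronE.
rewrite exchange_big /=; under eq_bigr do rewrite exchange_big /=.
under eq_bigr do under eq_bigr do rewrite exchange_big /=.
under eq_bigr do under eq_bigr do under eq_bigr do rewrite exchange_big /=.
under eq_bigr do under eq_bigr do under eq_bigr do under eq_bigr do rewrite UUE.
under eq_bigr do under eq_bigr do rewrite exchange_big /=.
under eq_bigr do under eq_bigr do under eq_bigr do rewrite sum_delta.
rewrite exchange_big /=; apply: eq_bigr => k _.
rewrite exchange_big /=; apply: eq_bigr => l _.
by rewrite mxE big_distrr big_distrl.
Qed.

Lemma ptrace1_apply_kron_kraus UFs X : fst_unitary UFs ->
  ptrace1 (apply_channel (kron_kraus UFs) X) =
  apply_channel (map snd UFs) (ptrace1 X).
Proof.
move=> unitaryU; rewrite /apply_channel !big_map.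
have ptrace1_sum I (r : seq I) (F : I -> 'M[C]_(a * m')) :
    ptrace1 (\sum_(i <- r) F i) = \sum_(i <- r) ptrace1 (F i).
  apply/matrixP => i j; rewrite summxE mxE; under eq_bigr do rewrite summxE.
  by rewrite exchange_big /=; apply: eq_bigr => k _; rewrite mxE.
rewrite ptrace1_sum big_seq [RHS]big_seq; apply: eq_bigr => UF /unitaryU.
exact: ptrace1_conj_kron.
Qed.

End KronChannels.

Section Convertible.
Variable C : numClosedFieldType.

Definition convertible a m m' (X : 'M[C]_(a * m)) (Y : 'M[C]_(a * m')) : Prop :=
  exists UFs : seq ('M[C]_a * 'M[C]_(m', m)),
    [/\ fst_unitary UFs, kraus_channel (map snd UFs) &
        apply_channel (kron_kraus UFs) X = Y].

Lemma density_convertible a m m' (X : 'M[C]_(a * m)) (Y : 'M[C]_(a * m')) :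
  convertible X Y -> density X -> density Y.
Proof.
move=> [UFs [unitaryU FsP <-]]; apply: density_apply_channel.
exact: kraus_channel_kron.
Qed.

Lemma ext_le_trans (x y z : ext C) : ext_le x y -> ext_le y z -> ext_le x z.
Proof.
case: x => [r||]; case: y => [s||]; case: z => [t||] //=.
exact: le_trans.
Qed.

Lemma ext_le_anti (x y : ext C) : ext_le x y -> ext_le y x -> x = y.
Proof.
case: x => [r||]; case: y => [s||] //= rs sr.
by congr EFin; apply/eqP; rewrite eq_le rs sr.
Qed.

Lemma ext_opp_le (x y : ext C) : ext_le x y -> ext_le (ext_opp y) (ext_opp x).
Proof. by case: x => [r||]; case: y => [s||] //=; rewrite lerN2. Qed.

Variables (log : C -> C) (D : divergence_family C).
Hypothesis divD : divergence log D.

(* H_down and H_up of [Y] dominate those of [X]; recall that [Hup_ub] is the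
   set of upper bounds of H_up. *)
Definition entropies_le a m m' (X : 'M[C]_(a * m)) (Y : 'M[C]_(a * m')) : Prop :=
  ext_le (Hdown D X) (Hdown D Y) /\ (forall h, Hup_ub D Y h -> Hup_ub D X h).

Lemma entropies_le_trans a m m' m'' (X : 'M[C]_(a * m)) (Y : 'M[C]_(a * m'))
    (Z : 'M[C]_(a * m'')) :
  entropies_le X Y -> entropies_le Y Z -> entropies_le X Z.
Proof.
move=> [XY_down XY_up] [YZ_down YZ_up]; split; first exact: ext_le_trans XY_down _.
by move=> h /YZ_up /XY_up.
Qed.

Lemma entropies_le_anti a m m' (X : 'M[C]_(a * m)) (Y : 'M[C]_(a * m')) :
  entropies_le X Y -> entropies_le Y X ->
  Hdown D X = Hdown D Y /\ (forall h, Hup_ub D X h <-> Hup_ub D Y h).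
Proof.
move=> [XY_down XY_up] [YX_down YX_up]; split; first exact: ext_le_anti.
by move=> h; split; [apply: YX_up | apply: XY_up].
Qed.

Lemma entropies_le_convertible a m m' (X : 'M[C]_(a * m)) (Y : 'M[C]_(a * m')) :
  convertible X Y -> density X -> entropies_le X Y.
Proof.
move=> [UFs [unitaryU FsP <-]] densX.
have [_ [DP _]] := divD; have KP := kraus_channel_kron unitaryU FsP.
split.
  apply: ext_opp_le; rewrite ptrace1_apply_kron_kraus // -apply_kron_kraus_kron1 //.
  by apply: DP => //; apply/psd_kron1/psd_ptrace1; case: densX.
move=> h Yh sigma densS.
apply: ext_le_trans (Yh _ (density_apply_channel FsP densS)).
apply: ext_opp_le; rewrite -apply_kron_kraus_kron1 //.
by apply: DP => //; apply: psd_kron1; case: densS.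
Qed.

End Convertible.

Section Purifications.
Variable C : numClosedFieldType.

Local Open Scope sesquilinear_scope.
Lemma adj_trmxC m n (A : 'M[C]_(m, n)) : adj A = A ^t*.
Proof. by apply/matrixP => i j; rewrite !mxE. Qed.
Local Close Scope sesquilinear_scope.

Lemma spectral_herm n (H : 'M[C]_n) : adj H = H ->
  exists (Q : 'M[C]_n) (l : 'rV[C]_n),
    [/\ Q *m adj Q = 1%:M, adj Q *m Q = 1%:M & H = adj Q *m diag_mx l *m Q].
Proof.
move=> hermH.
have normalH : H \is normalmx by apply/normalmxP; rewrite -adj_trmxC hermH.
have HE := orthomx_spectralP normalH.
have unitaryQ := spectral_unitarymx H.
exists (spectralmx H), (spectral_diag H); split.
- by rewrite adj_trmxC; apply/unitarymxP.
- by rewrite adj_trmxC -invmx_unitary // mulVmx // unitarymx_unit.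
- by rewrite adj_trmxC -invmx_unitary.
Qed.

Lemma gram_diagE n p (G : 'M[C]_(n, p)) (l : 'rV[C]_n) i :
  G *m adj G = diag_mx l -> l 0 i = \sum_j G i j * (G i j)^*.
Proof.
move=> /matrixP /(_ i i); rewrite !mxE eqxx mulr1n => <-.
by apply: eq_bigr => j _; rewrite adjE.
Qed.

(* Rows of [G] with a zero diagonal entry in [G G^*] vanish. *)
Lemma gram_diag_pinv n p (G : 'M[C]_(n, p)) (l : 'rV[C]_n) :
  G *m adj G = diag_mx l ->
  diag_mx l *m (diag_mx (\row_i (l 0 i)^-1) *m G) = G.
Proof.
move=> GG; apply/matrixP => i j; rewrite !mul_diag_mx !mxE.
have [l0|l_neq0] := eqVneq (l 0 i) 0; last by rewrite mulrA mulfV // mul1r.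
have /eqP := gram_diagE i GG; rewrite l0 eq_sym psumr_eq0 => [/allP|k _].
  by move=> /(_ j (mem_index_enum _)); rewrite mul_conjC_eq0 => /eqP->; rewrite !mulr0.
exact: mul_conjC_ge0.
Qed.

Lemma gram_pinv n c (M : 'M[C]_(n, c)) :
  exists Mp : 'M[C]_n,
    [/\ adj Mp = Mp, Mp *m (M *m adj M) *m Mp = Mp &
        forall p (G : 'M[C]_(n, p)),
          G *m adj G = M *m adj M -> M *m adj M *m Mp *m G = G].
Proof.
have hermH : adj (M *m adj M) = M *m adj M by rewrite adjM adjK.
have [Q [l [QQ' Q'Q HE]]] := spectral_herm hermH.
set L := diag_mx l; set Lp := diag_mx (\row_i (l 0 i)^-1).
have QG p (G : 'M[C]_(n, p)) :
    G *m adj G = M *m adj M -> (Q *m G) *m adj (Q *m G) = L.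
  move=> GG; rewrite adjM mulmxA -(mulmxA Q) GG HE !mulmxA QQ' mul1mx.
  by rewrite -mulmxA QQ' mulmx1.
have l_real i : (l 0 i)^* = l 0 i.
  rewrite (gram_diagE i (QG _ _ erefl)) rmorph_sum.
  by apply: eq_bigr => j _; rewrite rmorphM /= conjCK mulrC.
have LpLLp : Lp *m (L *m Lp) = Lp.
  apply/matrixP => i j; rewrite !mul_diag_mx !mxE.
  have [->|l_neq0] := eqVneq (l 0 i) 0; first by rewrite invr0 !mul0r mul0rn.
  by rewrite mulKf.
exists (adj Q *m Lp *m Q); split.
- rewrite !adjM adjK mulmxA; congr (_ *m _ *m _).
  apply/matrixP => i j; rewrite adjE !mxE.
  case: (eqVneq i j) => [->|/negbTE ij]; rewrite ?eqxx ?(eq_sym j) ?ij.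
    by rewrite !mulr1n fmorphV /= l_real.
  by rewrite !mulr0n rmorph0.
- rewrite HE -!mulmxA (mulmxA Q (adj Q)) QQ' mul1mx (mulmxA Q (adj Q)) QQ' mul1mx.
  by rewrite (mulmxA L Lp) (mulmxA Lp) LpLLp.
move=> p G GG; rewrite HE -!mulmxA (mulmxA Q (adj Q)) QQ' mul1mx.
by rewrite gram_diag_pinv ?QG // mulmxA Q'Q mul1mx.
Qed.

(* The missing Kraus operators are the rows of the complementary projection. *)
Lemma kraus_complete c0 c (F0 : 'M[C]_(c0, c)) : (0 < c0)%N ->
  let P := adj F0 *m F0 in P *m P = P ->
  exists Ks, kraus_channel (F0 :: Ks) /\ forall K, K \in Ks -> K *m P = 0.
Proof.
move=> c0_gt0 P PP; set Pc := 1%:M - P.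
have hermPc : adj Pc = Pc by rewrite adjB adj_mx1 /P adjM adjK.
have PcPc : Pc *m Pc = Pc.
  by rewrite /Pc mulmxBr mulmx1 mulmxBl mul1mx PP subrr subr0.
exists [seq delta_mx (Ordinal c0_gt0) j *m Pc | j <- index_enum 'I_c]; split.
  rewrite /kraus_channel big_cons big_map.
  under eq_bigr do rewrite adjM hermPc adj_delta -mulmxA
    (mulmxA (delta_mx _ _)) mul_delta_mx.
  by rewrite -mulmx_sumr -mulmx_suml -mx1_sum_delta mul1mx PcPc /Pc addrC subrK.
move=> K /mapP [j _ ->]; rewrite -mulmxA /Pc mulmxBl mul1mx PP subrr.
exact: mulmx0.
Qed.

(* The witness is [T = M^* Mp W] with [Mp] from [gram_pinv]; then [T T^*] is the
   projection [M^* Mp M] onto the row space of [M]. *)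
Lemma gram_eq_kraus n c c0 (M : 'M[C]_(n, c)) (W : 'M[C]_(n, c0)) :
  M *m adj M = W *m adj W -> (0 < c0)%N ->
  exists (F0 : 'M[C]_(c0, c)) (Ks : seq 'M[C]_(c0, c)),
    [/\ M *m F0^T = W, (forall K, K \in Ks -> M *m K^T = 0) &
        kraus_channel (F0 :: Ks)].
Proof.
move=> MW c0_gt0; have [Mp [hermMp MpHMp HMpG]] := gram_pinv M.
set T := adj M *m Mp *m W; set P := T *m adj T.
have MT : M *m T = W by rewrite /T !mulmxA HMpG.
have PE : P = adj M *m Mp *m M.
  rewrite /P /T !adjM adjK hermMp -!mulmxA (mulmxA W) -MW.
  by rewrite (mulmxA (M *m adj M)) (mulmxA Mp) (mulmxA Mp (M *m adj M)) MpHMp mulmxA.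
have MP : M *m P = M by rewrite PE !mulmxA HMpG.
have PP : P *m P = P by rewrite {1}PE -!mulmxA MP !mulmxA -PE.
have F0F0 : adj T^T *m T^T = P^T by rewrite adj_trmx -trmx_mul.
have [|Ks [KsP KsPT]] := kraus_complete c0_gt0 (F0 := T^T).
  by rewrite F0F0 -trmx_mul PP.
exists T^T, Ks; split=> //; first by rewrite trmxK.
move=> K /KsPT; rewrite F0F0 => /(congr1 trmx); rewrite trmx_mul trmxK trmx0.
by rewrite -{1}MP -mulmxA => ->; rewrite mulmx0.
Qed.

(* The marginal on the first and last factor of the pure state with
   coefficient matrix [M] over (H_a (x) H_m) (x) H_c. *)
Definition mid_marginal a m c (M : 'M[C]_(a * m, c)) : 'M[C]_(a * c) :=
  \matrix_(k, l) \sum_t M (mxvec_index (unpair k).1 t) (unpair k).2 *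
                        (M (mxvec_index (unpair l).1 t) (unpair l).2)^*.

Lemma mid_marginalE a m c (M : 'M[C]_(a * m, c)) x g x' g' :
  mid_marginal M (mxvec_index x g) (mxvec_index x' g') =
  \sum_t M (mxvec_index x t) g * (M (mxvec_index x' t) g')^*.
Proof. by rewrite mxE !unpairK. Qed.

Lemma pureE n (v : 'cV[C]_n) i j : pure v i j = v i 0 * (v j 0)^*.
Proof. by rewrite mxE big_ord1 adjE. Qed.

Lemma ptrace2_pure n c (v : 'cV[C]_(n * c)) :
  ptrace2 (pure v) = vec_mx v^T *m adj (vec_mx v^T).
Proof.
apply/matrixP => i j; rewrite !mxE; apply: eq_bigr => t _.
by rewrite pureE adjE !mxE.
Qed.

Lemma ptrace_mid_pure a m c (v : 'cV[C]_((a * m) * c)) :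
  ptrace_mid (pure v) = mid_marginal (vec_mx v^T).
Proof.
apply/matrixP => k l; rewrite !mxE; apply: eq_bigr => t _.
by rewrite pureE !mxE.
Qed.

Lemma mxtrace_mid_marginal a m c (M : 'M[C]_(a * m, c)) :
  \tr (mid_marginal M) = \tr (M *m adj M).
Proof.
rewrite /mxtrace !big_mxvec_index; apply: eq_bigr => x _.
under eq_bigr do rewrite mid_marginalE.
under [RHS]eq_bigr do rewrite mxE.
rewrite exchange_big /=; apply: eq_bigr => t _; apply: eq_bigr => g _.
by rewrite adjE.
Qed.

Lemma density_mid_marginal a m c (M : 'M[C]_(a * m, c)) :
  \tr (M *m adj M) = 1 -> density (mid_marginal M).
Proof.
move=> trM; split; last by rewrite mxtrace_mid_marginal.
have -> : mid_marginal M =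
    \sum_t pure (\col_k M (mxvec_index (unpair k).1 t) (unpair k).2).
  apply/matrixP => k l; rewrite !mxE summxE; apply: eq_bigr => t _.
  by rewrite pureE !mxE.
by apply: psd_sum => t _; apply: psd_pure.
Qed.

Lemma mid_marginal_conj a m c c0 (M : 'M[C]_(a * m, c)) (F : 'M[C]_(c0, c)) :
  kron (1%:M : 'M_a) F *m mid_marginal M *m adj (kron 1%:M F) =
  mid_marginal (M *m F^T).
Proof.
apply/matrixP => k l; case/mxvec_indexP: k => x g; case/mxvec_indexP: l => x' g'.
rewrite mulmx_adjE mid_marginalE big_mxvec_index.
under eq_bigr do under eq_bigr do rewrite big_mxvec_index.
under eq_bigr do under eq_bigr do under eq_bigr do under eq_bigr do
  rewrite !kronE mid_marginalE !mxE rmorphM /= rmorph_nat mulrACA -mulrA mulrACA.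
under eq_bigr do under eq_bigr do under eq_bigr do rewrite -big_distrr /= -mulrA.
under eq_bigr do under eq_bigr do rewrite -big_distrr /= sum_delta'.
under eq_bigr do rewrite -big_distrr /=.
rewrite sum_delta'.
under [RHS]eq_bigr do rewrite !mxE rmorph_sum big_distrl /=.
under [RHS]eq_bigr do under eq_bigr do rewrite big_distrr /=.
rewrite [RHS]exchange_big /=; apply: eq_bigr => i _.
rewrite [RHS]exchange_big /=; apply: eq_bigr => i' _.
rewrite big_distrl big_distrr /=; apply: eq_bigr => t _.
by rewrite !mxE rmorphM /=; ring.
Qed.

Lemma convertible_mid_marginal a m c c0 (M : 'M[C]_(a * m, c))
    (W : 'M[C]_(a * m, c0)) :
  M *m adj M = W *m adj W -> (0 < c0)%N ->
  convertible (mid_marginal M) (mid_marginal W).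
Proof.
move=> MW c0_gt0; have [F0 [Ks [MF0 MKs KsP]]] := gram_eq_kraus MW c0_gt0.
exists [seq (1%:M, K) | K <- F0 :: Ks]; split.
- by move=> _ /mapP [K _ ->]; rewrite /= adj_mx1 mul1mx.
- by rewrite -map_comp map_id.
rewrite /apply_channel /kron_kraus -map_comp big_map big_cons /=.
rewrite mid_marginal_conj MF0 big_seq big1 ?addr0 // => K /MKs MK.
rewrite /= mid_marginal_conj MK; apply/matrixP => k l.
by rewrite !mxE big1 // => t _; rewrite !mxE mul0r.
Qed.

Lemma gram_mxtrace1_gt0 n c (M : 'M[C]_(n, c)) : \tr (M *m adj M) = 1 -> (0 < c)%N.
Proof.
case: c M => [|c] M //.
by rewrite thinmx0 mul0mx mxtrace0 => /eqP; rewrite eq_sym oner_eq0.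
Qed.

End Purifications.

Section UniformShift.
Variables (C : numClosedFieldType) (d : nat).
Local Notation N := d.+1.
Local Notation I := 'I_d.+1.

Lemma cq_stateE a b (P : 'I_a -> C) (S : 'I_a -> 'M[C]_b) y g y' g' :
  (\sum_t P t *: kron (proj t) (S t)) (mxvec_index y g) (mxvec_index y' g') =
  (y == y')%:R * P y * S y g g'.
Proof.
rewrite summxE (bigD1 y) //= [X in _ + X]big1 ?addr0 => [|t /negbTE ty]; last first.
  by rewrite mxE kronE mxE (eq_sym y) ty mul0r mulr0.
by rewrite mxE kronE !mxE eqxx /= (eq_sym y') mulrA [P y * _]mulrC.
Qed.

(* [reflect_mx s] maps |z> to |s - z>. *)
Definition reflect_mx (s : I) : 'M[C]_N := rowsel (fun z : I => s - z) (fun _ => 1).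

Lemma reflect_mx_unitary s : adj (reflect_mx s) *m reflect_mx s = 1%:M.
Proof.
apply/matrixP => k l; rewrite rowsel_gramE (big_pred1 (s - k)) => [|i]; last first.
  exact: (can2_eq (subKr s) (subKr s)).
by rewrite rmorph1 !mulr1 !mxE.
Qed.

Definition isqrtN : C := sqrtC N%:R^-1.

Lemma isqrtN_norm : isqrtN * isqrtN^* = N%:R^-1.
Proof.
rewrite geC0_conj ?sqrtC_ge0 ?invr_ge0 ?ler0n //.
by rewrite -expr2 sqrtCK.
Qed.

Lemma sum_invN (c : C) : \sum_(t : I) (N%:R^-1 * c) = c.
Proof.
rewrite sumr_const card_ord -mulrnAl -mulr_natr mulVf ?mul1r //.
by rewrite pnatr_eq0.
Qed.

(* Y uniformly distributed and X := Y - Z, where Z (x) B is in state R. *)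
Definition uniform_shift b (R : 'M[C]_(N * b)) : 'M[C]_(N * (N * b)) :=
  \matrix_(k, l)
    (N%:R^-1 * ((unpair (unpair k).2).1 == (unpair (unpair l).2).1)%:R *
     R (mxvec_index ((unpair (unpair k).2).1 - (unpair k).1) (unpair (unpair k).2).2)
       (mxvec_index ((unpair (unpair l).2).1 - (unpair l).1) (unpair (unpair l).2).2)).

Lemma uniform_shiftE b (R : 'M[C]_(N * b)) x y g x' y' g' :
  uniform_shift R (mxvec_index x (mxvec_index y g)) (mxvec_index x' (mxvec_index y' g')) =
  N%:R^-1 * (y == y')%:R * R (mxvec_index (y - x) g) (mxvec_index (y' - x') g').
Proof. by rewrite mxE !unpairK. Qed.

Lemma uniform_shift_cq b (P : I -> C) (S : I -> 'M[C]_b) :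
  N%:R^-1 *: \sum_x \sum_z P z *: kron (proj x) (kron (proj (x + z)) (S z)) =
  uniform_shift (\sum_y P y *: kron (proj y) (S y)).
Proof.
apply/matrixP => k l; case/mxvec_indexP: k => x k; case/mxvec_indexP: k => y g.
case/mxvec_indexP: l => x' l; case/mxvec_indexP: l => y' g'.
rewrite uniform_shiftE cq_stateE mxE summxE (bigD1 x) //= [X in _ + X]big1 ?addr0; last first.
  move=> t /negbTE tx; rewrite summxE big1 // => z _.
  by rewrite mxE kronE mxE (eq_sym x) tx mul0r mulr0.
rewrite summxE (bigD1 (y - x)) //= [X in _ + X]big1 ?addr0; last first.
  move=> z /negbTE zyx; rewrite mxE !kronE !mxE.
  have -> : (y == x + z) = false.
    by apply: contraFF zyx => /eqP ->; rewrite addrC addKr.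
  by rewrite /= !mul0r !mulr0.
rewrite mxE !kronE !mxE !eqxx subrKC eqxx /= (eq_sym x') (eq_sym y').
have [<-|_] := eqVneq y y'; last by rewrite !(mul0r, mulr0).
by rewrite (inj_eq (subrI y)); ring.
Qed.

Lemma convertible_uniform_shift b (R : 'M[C]_(N * b)) :
  convertible R (uniform_shift R).
Proof.
exists [seq (reflect_mx s, embed b isqrtN s) | s <- index_enum I]; split.
- by move=> _ /mapP [s _ ->]; apply: reflect_mx_unitary.
- rewrite /kraus_channel -map_comp big_map /=.
  under eq_bigr do rewrite embed_scale -adj_slice adj_scalemx adjK -scalemxAl
    -scalemxAr slice_isometry scalerA mulrC isqrtN_norm.
  by rewrite sumr_const card_ord scalerMnl -mulr_natr mulVf ?pnatr_eq0 ?scale1r.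
apply/matrixP => k l; case/mxvec_indexP: k => x k; case/mxvec_indexP: k => y g.
case/mxvec_indexP: l => x' l; case/mxvec_indexP: l => y' g'.
rewrite /apply_channel big_map big_map summxE /= uniform_shiftE.
under eq_bigr do rewrite kron_rowsel rowsel_conjE !unpairK /=.
rewrite (bigD1 y) //= [X in _ + X]big1 ?addr0 => [|s /negbTE ys]; last first.
  by rewrite (eq_sym y) ys !(mulr0, mul0r).
rewrite eqxx (eq_sym y'); have [<-|_] := eqVneq y y'.
  by rewrite -isqrtN_norm !rmorphM rmorph1 /=; ring.
by rewrite !(mulr0, mul0r, rmorph0).
Qed.

Lemma convertible_uniform_unshift b (R : 'M[C]_(N * b)) :
  convertible (uniform_shift R) R.
Proof.
exists [seq (reflect_mx s, slice b s) | s <- index_enum I]; split.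
- by move=> _ /mapP [s _ ->]; apply: reflect_mx_unitary.
- by rewrite /kraus_channel -map_comp big_map sum_slice_gram.
apply/matrixP => k l; case/mxvec_indexP: k => z g; case/mxvec_indexP: l => z' g'.
rewrite /apply_channel big_map big_map summxE /= -[RHS]sum_invN.
apply: eq_bigr => s _; rewrite kron_rowsel rowsel_conjE !unpairK /= uniform_shiftE.
by rewrite eqxx !subKr mul1r rmorph1; ring.
Qed.

(* A purification of [uniform_shift (W *m adj W)], on the purifying system
   N (x) c. *)
Definition shift_purif b c (W : 'M[C]_(N * b, c)) : 'M[C]_(N * (N * b), N * c) :=
  \matrix_(k, l)
    (isqrtN * ((unpair (unpair k).2).1 == (unpair l).1)%:R *
     W (mxvec_index ((unpair l).1 - (unpair k).1) (unpair (unpair k).2).2) (unpair l).2).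

Lemma shift_purifE b c (W : 'M[C]_(N * b, c)) x y g s h :
  shift_purif W (mxvec_index x (mxvec_index y g)) (mxvec_index s h) =
  isqrtN * (y == s)%:R * W (mxvec_index (s - x) g) h.
Proof. by rewrite mxE !unpairK. Qed.

Lemma shift_purif_gram b c (W : 'M[C]_(N * b, c)) :
  shift_purif W *m adj (shift_purif W) = uniform_shift (W *m adj W).
Proof.
apply/matrixP => k l; case/mxvec_indexP: k => x k; case/mxvec_indexP: k => y g.
case/mxvec_indexP: l => x' l; case/mxvec_indexP: l => y' g'.
rewrite uniform_shiftE !mxE big_mxvec_index (bigD1 y) //= [X in _ + X]big1 ?addr0; last first.
  move=> s /negbTE ys; apply: big1 => h _.
  by rewrite adjE !shift_purifE (eq_sym y) ys mulr0 !mul0r.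
rewrite big_distrr /=; apply: eq_bigr => h _.
rewrite adjE !shift_purifE adjE eqxx -isqrtN_norm !rmorphM /= rmorph_nat (eq_sym y').
by have [<-|_] := eqVneq y y'; rewrite ?eqxx /=; ring.
Qed.

Lemma mid_marginal_shift_purif b c (W : 'M[C]_(N * b, c)) :
  mid_marginal (shift_purif W) = uniform_shift (mid_marginal W).
Proof.
apply/matrixP => k l; case/mxvec_indexP: k => x k; case/mxvec_indexP: k => s h.
case/mxvec_indexP: l => x' l; case/mxvec_indexP: l => s' h'.
rewrite mid_marginalE uniform_shiftE mid_marginalE big_mxvec_index.
under eq_bigr do under eq_bigr do rewrite !shift_purifE.
rewrite (bigD1 s) //= [X in _ + X]big1 ?addr0; last first.
  by move=> y /negbTE ys; apply: big1 => g _; rewrite ys mulr0 !mul0r.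
rewrite big_distrr /=; apply: eq_bigr => g _.
rewrite eqxx -isqrtN_norm !rmorphM /= rmorph_nat.
have [<-|/negbTE ss'] := eqVneq s s'; rewrite ?eqxx ?ss' /=; ring.
Qed.

Variables (log : C -> C) (D : divergence_family C).
Hypothesis divD : divergence log D.

Lemma uniform_shift_entropies b (R : 'M[C]_(N * b)) : density R ->
  Hdown D (uniform_shift R) = Hdown D R /\
  (forall h, Hup_ub D (uniform_shift R) h <-> Hup_ub D R h).
Proof.
move=> densR; have shiftR := convertible_uniform_shift R.
apply: entropies_le_anti; apply: (entropies_le_convertible divD) => //.
  exact: convertible_uniform_unshift.
exact: density_convertible shiftR densR.
Qed.

Lemma purification_entropies b c c' (M : 'M[C]_(N * (N * b), c))
    (W : 'M[C]_(N * b, c')) :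
  M *m adj M = uniform_shift (W *m adj W) -> \tr (W *m adj W) = 1 ->
  Hdown D (mid_marginal M) = Hdown D (mid_marginal W) /\
  (forall h, Hup_ub D (mid_marginal M) h <-> Hup_ub D (mid_marginal W) h).
Proof.
move=> MW trW; set V := shift_purif W.
have MV : M *m adj M = V *m adj V by rewrite shift_purif_gram.
have densW := density_mid_marginal trW.
have shiftW := convertible_uniform_shift (mid_marginal W).
have densU := density_convertible shiftW densW.
have densV : density (mid_marginal V) by rewrite mid_marginal_shift_purif.
have trV : \tr (V *m adj V) = 1 by rewrite -mxtrace_mid_marginal; case: densV.
have trM : \tr (M *m adj M) = 1 by rewrite MV.
have MtoV := convertible_mid_marginal MV (gram_mxtrace1_gt0 trV).
have VtoM := convertible_mid_marginal (esym MV) (gram_mxtrace1_gt0 trM).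
have densM := density_mid_marginal trM.
apply: entropies_le_anti.
  apply: entropies_le_trans (entropies_le_convertible divD MtoV densM) _.
  rewrite mid_marginal_shift_purif.
  exact (entropies_le_convertible divD (convertible_uniform_unshift _) densU).
apply: entropies_le_trans (entropies_le_convertible divD shiftW densW) _.
rewrite -mid_marginal_shift_purif.
exact (entropies_le_convertible divD VtoM densV).
Qed.

End UniformShift.

Unset Implicit Arguments.

Theorem lemma2 (C : numClosedFieldType) (log : C -> C) (d b : nat)
  (P : 'I_d.+1 -> C) (sigma : 'I_d.+1 -> 'M[C]_b) :
  is_log log ->
  (forall z, 0 <= P z) -> \sum_z P z = 1 ->
  (forall z, density (sigma z)) ->
  let psi : 'M[C]_(d.+1 * (d.+1 * b)) :=
    (d.+1%:R)^-1 *: \sum_(x : 'I_d.+1) \sum_(z : 'I_d.+1)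
       P z *: kron (proj x) (kron (proj (x + z)) (sigma z)) in
  let rho : 'M[C]_(d.+1 * b) :=
    \sum_(y : 'I_d.+1) P y *: kron (proj y) (sigma y) in
  forall D : divergence_family C, divergence log D ->
  Hdown D psi = Hdown D rho /\
  (forall h, Hup_ub D psi h <-> Hup_ub D rho h) /\
  (forall c c' (v : 'cV[C]_((d.+1 * (d.+1 * b)) * c)) (w : 'cV[C]_((d.+1 * b) * c')),
     ptrace2 (pure v) = psi -> ptrace2 (pure w) = rho ->
     ext_opp (Hdown D (ptrace_mid (pure v))) = ext_opp (Hdown D (ptrace_mid (pure w)))) /\
  (forall c c' (v : 'cV[C]_((d.+1 * (d.+1 * b)) * c)) (w : 'cV[C]_((d.+1 * b) * c')),
     ptrace2 (pure v) = psi -> ptrace2 (pure w) = rho ->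
     forall h, Hup_ub D (ptrace_mid (pure v)) h <-> Hup_ub D (ptrace_mid (pure w)) h).
Proof.
move=> _ P_ge0 P_sum sigma_density psi rho D divD.
have psiE : psi = uniform_shift rho by rewrite /psi uniform_shift_cq.
have rho_density : density rho.
  by apply: density_convex => // y; apply: density_kron_proj.
have purifications c c' (v : 'cV[C]_((d.+1 * (d.+1 * b)) * c))
    (w : 'cV[C]_((d.+1 * b) * c')) :
    ptrace2 (pure v) = psi -> ptrace2 (pure w) = rho ->
    Hdown D (ptrace_mid (pure v)) = Hdown D (ptrace_mid (pure w)) /\
    (forall h, Hup_ub D (ptrace_mid (pure v)) h <-> Hup_ub D (ptrace_mid (pure w)) h).
  rewrite !ptrace2_pure !ptrace_mid_pure psiE => vE wE.
  rewrite -wE in vE; apply: (purification_entropies divD vE).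
  by rewrite wE; case: rho_density.
have [Hdown_eq Hup_eq] := uniform_shift_entropies divD rho_density.
rewrite -psiE in Hdown_eq Hup_eq.
split=> //; split=> //; split=> [c c' v w vE wE | c c' v w vE wE].
  by have [-> _] := purifications c c' v w vE wE.
exact: (purifications c c' v w vE wE).2.
Qed.
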